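(* Let $\mathcal{L}$ be the set of formulas of classical propositional calculus (with $\neg$ and $\wedge$ as basic connectives and the other connectives defined classically), and let $a, b \in \mathcal{L}$. The following are equivalent: (1) $a$ logically implies $b$ in classical propositional logic, $a \models b$; (2) for every operation $\mathcal{C}: 2^{\mathcal{L}}\to 2^{\mathcal{L}}$ satisfying Inclusion, Idempotence, Monotonicity, Weak Compactness, $\wedge$-R, $\neg$-R1 and $\neg$-R2, one has $b \in \mathcal{C}(\{a\})$; (3) for every operation $\mathcal{C}: 2^{\mathcal{L}}\to 2^{\mathcal{L}}$ satisfying Inclusion, Cumulativity, Weak Compactness, $\wedge$-R, $\neg$-R1 and $\neg$-R2, one has $b \in \mathcal{C}(\{a\})$; (4) for every operation $\mathcal{C}$ as in (3) and every $A \subseteq \mathcal{L}$, one has $b \in \mathcal{C}(A \cup\{a\})$; (5) for every operation $\mathcal{C}$ as in (3), one has $\mathcal{C}(\{a, \neg b\}) = \mathcal{L}$.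
   Context: Write $\mathcal{C}(A, a_1,\dots,a_k)$ for $\mathcal{C}(A\cup\{a_1,\dots,a_k\})$. Properties, for all $A,B\subseteq\mathcal{L}$, $a,b\in\mathcal{L}$: Inclusion: $A \subseteq \mathcal{C}(A)$. Idempotence: $\mathcal{C}(\mathcal{C}(A)) = \mathcal{C}(A)$. Monotonicity: $A \subseteq B \Rightarrow \mathcal{C}(A)\subseteq\mathcal{C}(B)$. Cumulativity: $A \subseteq B \subseteq \mathcal{C}(A) \Rightarrow \mathcal{C}(A)=\mathcal{C}(B)$. Weak Compactness: if $\mathcal{C}(A)=\mathcal{L}$ then $\mathcal{C}(B)=\mathcal{L}$ for some finite $B\subseteq A$. $\wedge$-R: $\mathcal{C}(A, a\wedge b) = \mathcal{C}(A,a,b)$. $\neg$-R1: $\mathcal{C}(A,a,\neg a)=\mathcal{L}$. $\neg$-R2: if $\mathcal{C}(A,\neg a)=\mathcal{L}$ then $a\in\mathcal{C}(A)$. *)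

From Stdlib Require Import List.

Inductive form : Type :=
| Var : nat -> form
| Neg : form -> form
| And : form -> form -> form.

Fixpoint eval (v : nat -> bool) (f : form) : bool :=
  match f with
  | Var n => v n
  | Neg g => negb (eval v g)
  | And g h => andb (eval v g) (eval v h)
  end.

Definition entails (a b : form) : Prop :=
  forall v : nat -> bool, eval v a = true -> eval v b = true.

Definition fset := form -> Prop.
Definition fullset : fset := fun _ => True.
Definition subset (A B : fset) : Prop := forall x, A x -> B x.
Definition union (A B : fset) : fset := fun x => A x \/ B x.
Definition sing (a : form) : fset := fun x => x = a.
Definition pair (a b : form) : fset := fun x => x = a \/ x = b.
Definition add1 (A : fset) (a : form) : fset := union A (sing a).
Definition add2 (A : fset) (a b : form) : fset := union A (pair a b).
Definition finite (B : fset) : Prop := exists l : list form, forall x, B x <-> In x l.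

Definition Operation := fset -> fset.

Definition Inclusion (C : Operation) : Prop := forall A, subset A (C A).
Definition Idempotence (C : Operation) : Prop := forall A, C (C A) = C A.
Definition Monotonicity (C : Operation) : Prop :=
  forall A B, subset A B -> subset (C A) (C B).
Definition Cumulativity (C : Operation) : Prop :=
  forall A B, subset A B -> subset B (C A) -> C A = C B.
Definition WeakCompactness (C : Operation) : Prop :=
  forall A, C A = fullset -> exists B, finite B /\ subset B A /\ C B = fullset.
Definition AndR (C : Operation) : Prop :=
  forall A a b, C (add1 A (And a b)) = C (add2 A a b).
Definition NegR1 (C : Operation) : Prop :=
  forall A a, C (add2 A a (Neg a)) = fullset.
Definition NegR2 (C : Operation) : Prop :=
  forall A a, C (add1 A (Neg a)) = fullset -> C A a.

Definition classI (C : Operation) : Prop :=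
  Inclusion C /\ Idempotence C /\ Monotonicity C /\ WeakCompactness C /\
  AndR C /\ NegR1 C /\ NegR2 C.
Definition classII (C : Operation) : Prop :=
  Inclusion C /\ Cumulativity C /\ WeakCompactness C /\
  AndR C /\ NegR1 C /\ NegR2 C.

(* Soundness: an operation of class II is closed under the tableau rules for
   [Neg (Neg x)], [And x y] and [Neg (And x y)] (Inclusion and Cumulativity
   allow adding a formula already in [C S]; ∧-R, ¬-R1 and ¬-R2 do the rest),
   so by induction on size it sends every set containing a finite
   unsatisfiable list of formulas to the full set: a list of literals is either
   closed by ¬-R1 or satisfiable.  If [a |= b] then [{a, Neg b}] is
   unsatisfiable, and ¬-R2 yields [b ∈ C (A ∪ {a})].
   Completeness: finitary classical consequence is itself an operation of
   class I, hence of class II, so each of (2)-(5) applied to it gives [a |= b]. *)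

From Stdlib Require Import List Lia Wf_nat Classical FunctionalExtensionality
  PropExtensionality.
Import ListNotations.

Lemma fset_ext (A B : fset) : (forall x, A x <-> B x) -> A = B.
Proof.
  intros H. apply functional_extensionality; intros x.
  apply propositional_extensionality, H.
Qed.

Definition sat (v : nat -> bool) (l : list form) : Prop :=
  forall f, In f l -> eval v f = true.

Definition unsat (l : list form) : Prop := forall v, ~ sat v l.

Lemma sat_app v l1 l2 : sat v (l1 ++ l2) <-> sat v l1 /\ sat v l2.
Proof.
  unfold sat; split.
  - intros H; split; intros f Hf; apply H, in_app_iff; auto.
  - intros [H1 H2] f Hf; apply in_app_iff in Hf as [Hf | Hf]; auto.
Qed.

Fixpoint fsize (f : form) : nat :=
  match f with
  | Var _ => 1
  | Neg g => S (fsize g)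
  | And g h => S (fsize g + fsize h)
  end.

Definition lsize (l : list form) : nat := list_sum (map fsize l).

Lemma in_split_lsize f l : In f l ->
  exists r, lsize l = fsize f + lsize r /\ forall x, In x l <-> x = f \/ In x r.
Proof.
  intros Hf. destruct (in_split f l Hf) as (l1 & l2 & ->).
  exists (l1 ++ l2). unfold lsize. rewrite !map_app, !list_sum_app. simpl.
  split; [lia|]. intros x. rewrite !in_app_iff. simpl. intuition (subst; auto).
Qed.

Definition literal (f : form) : Prop :=
  match f with
  | Var _ | Neg (Var _) => True
  | _ => False
  end.

Lemma form_eq_dec (f g : form) : {f = g} + {f <> g}.
Proof. decide equality; apply PeanoNat.Nat.eq_dec. Qed.

Lemma literals_sat l :
  (forall f, In f l -> literal f) ->
  (forall m, In (Var m) l -> ~ In (Neg (Var m)) l) ->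
  exists v, sat v l.
Proof.
  intros Hlit Hcons.
  exists (fun m => if in_dec form_eq_dec (Var m) l then true else false).
  intros f Hf. specialize (Hlit f Hf).
  destruct f as [m | [m | g | g h] | g h]; try contradiction; simpl.
  - destruct (in_dec form_eq_dec (Var m) l); congruence.
  - destruct (in_dec form_eq_dec (Var m) l) as [Hm | _]; [|reflexivity].
    exfalso; exact (Hcons m Hm Hf).
Qed.

Section Refutation.

Variable C : Operation.
Hypothesis C_incl : Inclusion C.
Hypothesis C_cum : Cumulativity C.
Hypothesis C_and : AndR C.
Hypothesis C_neg1 : NegR1 C.
Hypothesis C_neg2 : NegR2 C.

Lemma C_add1_conseq A x : C A x -> C (add1 A x) = C A.
Proof.
  intros Hx. symmetry. apply C_cum.
  - intros y Hy; now left.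
  - intros y [Hy | ->]; [apply C_incl, Hy | exact Hx].
Qed.

Lemma full_subset A B : subset A B -> C A = fullset -> C B = fullset.
Proof.
  intros HAB HA. rewrite <- HA. symmetry. apply C_cum; [exact HAB|].
  rewrite HA. intros x _. exact I.
Qed.

Lemma refute_complementary S x : S x -> S (Neg x) -> C S = fullset.
Proof.
  intros Hx Hnx. apply (full_subset (add2 S x (Neg x))); [|apply C_neg1].
  intros z [Hz | [-> | ->]]; assumption.
Qed.

Lemma refute_neg_neg S x :
  S (Neg (Neg x)) -> C (add1 S x) = fullset -> C S = fullset.
Proof.
  intros Hx H. rewrite <- (C_add1_conseq S x); [exact H|].
  apply C_neg2, (refute_complementary _ (Neg x)); [now right | now left].
Qed.

Lemma refute_and S x y :
  S (And x y) -> C (add2 S x y) = fullset -> C S = fullset.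
Proof.
  intros Hxy H. rewrite <- (C_add1_conseq S (And x y)), C_and; [exact H|].
  apply C_incl, Hxy.
Qed.

Lemma refute_neg_and S x y : S (Neg (And x y)) ->
  C (add1 S (Neg x)) = fullset -> C (add1 S (Neg y)) = fullset ->
  C S = fullset.
Proof.
  intros Hxy Hnx Hny.
  assert (Hx : C S x) by now apply C_neg2.
  rewrite <- (C_add1_conseq S x Hx).
  assert (Hy : C (add1 S x) y).
  { apply C_neg2, (full_subset (add1 S (Neg y))); [|exact Hny].
    intros z [Hz | ->]; [left; left; exact Hz | now right]. }
  rewrite <- (C_add1_conseq _ y Hy).
  apply (full_subset (add2 S x y)).
  - intros z [Hz | [-> | ->]]; [left; left; exact Hz | left; now right | now right].
  - rewrite <- C_and. apply (refute_complementary _ (And x y)); [now right | now left].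
Qed.

Lemma refute_literals l S : (forall f, In f l -> literal f) ->
  unsat l -> (forall x, In x l -> S x) -> C S = fullset.
Proof.
  intros Hlit Hl HS.
  destruct (classic (exists m, In (Var m) l /\ In (Neg (Var m)) l))
    as [(m & Hm & Hnm) | Hcons].
  - apply (refute_complementary S (Var m)); apply HS; assumption.
  - destruct (literals_sat l Hlit) as [v Hv]; [|exfalso; exact (Hl v Hv)].
    intros m Hm Hnm. apply Hcons. now exists m.
Qed.

Lemma refute_unsat l S :
  unsat l -> (forall x, In x l -> S x) -> C S = fullset.
Proof.
  revert S.
  induction l as [l IH] using (well_founded_ind (well_founded_ltof _ lsize)).
  intros S Hl HS.
  destruct (classic (exists f, In f l /\ ~ literal f)) as [(f & Hf & Hnl) | Hlit].
  - destruct (in_split_lsize f l Hf) as (r & Hsize & Hmem).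
    (* the tableau rule replaces [f] by a list [l'] of smaller formulas *)
    assert (IHf : forall l' S', lsize l' < fsize f ->
              (forall v, sat v l' -> eval v f = true) ->
              (forall x, In x l' -> S' x) -> subset S S' -> C S' = fullset).
    { intros l' S' Hlt Hf' Hl' HSS'. apply (IH (l' ++ r)).
      - unfold ltof, lsize in *. rewrite map_app, list_sum_app. lia.
      - intros v Hv. apply sat_app in Hv as [Hv' Hr]. apply (Hl v).
        intros z Hz. apply Hmem in Hz as [-> | Hz]; [exact (Hf' v Hv') | exact (Hr z Hz)].
      - intros x Hx. apply in_app_iff in Hx as [Hx | Hx]; [exact (Hl' x Hx)|].
        apply HSS', HS, Hmem; now right. }
    assert (HSf : S f) by exact (HS f Hf).
    destruct f as [m | [m | x | x y] | x y]; try (exfalso; exact (Hnl I)).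
    + apply (refute_neg_neg S x HSf), (IHf [x]); unfold lsize; simpl; try lia.
      * intros v Hv. rewrite (Hv x) by now left. reflexivity.
      * intros z [<- | []]; now right.
      * intros z Hz; now left.
    + apply (refute_neg_and S x y HSf).
      * apply (IHf [Neg x]); unfold lsize; simpl; try lia.
        -- intros v Hv. generalize (Hv _ (or_introl eq_refl)). simpl.
           destruct (eval v x); easy.
        -- intros z [<- | []]; now right.
        -- intros z Hz; now left.
      * apply (IHf [Neg y]); unfold lsize; simpl; try lia.
        -- intros v Hv. generalize (Hv _ (or_introl eq_refl)). simpl.
           destruct (eval v x), (eval v y); easy.
        -- intros z [<- | []]; now right.
        -- intros z Hz; now left.
    + apply (refute_and S x y HSf), (IHf [x; y]); unfold lsize; simpl; try lia.
      * intros v Hv. rewrite (Hv x), (Hv y) by (simpl; auto). reflexivity.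
      * intros z [<- | [<- | []]]; right; [now left | now right].
      * intros z Hz; now left.
  - apply (refute_literals l); [|assumption..].
    intros f Hf. apply NNPP. intros Hnl. apply Hlit. now exists f.
Qed.

Lemma refute_entails a b S :
  entails a b -> S a -> S (Neg b) -> C S = fullset.
Proof.
  intros Hab Ha Hb. apply (refute_unsat [a; Neg b]).
  - intros v Hv. specialize (Hab v (Hv a (or_introl eq_refl))).
    specialize (Hv (Neg b) (or_intror (or_introl eq_refl))). simpl in Hv.
    rewrite Hab in Hv. discriminate.
  - intros x [<- | [<- | []]]; assumption.
Qed.

Lemma entails_conseq a b S : entails a b -> S a -> C S b.
Proof.
  intros Hab Ha. apply C_neg2, (refute_entails a b); [exact Hab | now left | now right].
Qed.

End Refutation.

Definition fin_conseq : Operation := fun A x =>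
  exists l, (forall y, In y l -> A y) /\ forall v, sat v l -> eval v x = true.

Lemma fin_conseq_sound S x v :
  fin_conseq S x -> (forall z, S z -> eval v z = true) -> eval v x = true.
Proof. intros (l & Hl & Hx) HS. apply Hx. intros z Hz. apply HS, Hl, Hz. Qed.

Lemma premises_split A P l : (forall y, In y l -> union A P y) ->
  exists l', (forall y, In y l' -> A y) /\
    forall v, sat v l' -> (forall z, P z -> eval v z = true) -> sat v l.
Proof.
  induction l as [|x l IH]; intros Hl.
  - exists []. split; [intros y []|]. intros v _ _ f [].
  - destruct IH as (l' & HA & Hsat); [intros y Hy; apply Hl; now right|].
    destruct (Hl x (or_introl eq_refl)) as [Hx | Hx].
    + exists (x :: l'). split; [intros y [<- | Hy]; auto|].
      intros v Hv HP f [<- | Hf]; [apply Hv; now left|].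
      apply (Hsat v); auto. intros z Hz; apply Hv; now right.
    + exists l'. split; [exact HA|].
      intros v Hv HP f [<- | Hf]; [exact (HP x Hx) | exact (Hsat v Hv HP f Hf)].
Qed.

Lemma fin_conseq_union A P x : fin_conseq (union A P) x ->
  exists l, (forall y, In y l -> A y) /\
    forall v, sat v l -> (forall z, P z -> eval v z = true) -> eval v x = true.
Proof.
  intros (l & Hl & Hx). destruct (premises_split A P l Hl) as (l' & HA & Hsat).
  exists l'. split; [exact HA|]. intros v Hv HP. exact (Hx v (Hsat v Hv HP)).
Qed.

Lemma fin_conseq_list A l : (forall y, In y l -> fin_conseq A y) ->
  exists l', (forall y, In y l' -> A y) /\ forall v, sat v l' -> sat v l.
Proof.
  induction l as [|x l IH]; intros Hl.
  - exists []. split; [intros y []|]. intros v _ f [].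
  - destruct IH as (l' & HA & Hsat); [intros y Hy; apply Hl; now right|].
    destruct (Hl x (or_introl eq_refl)) as (lx & Hlx & Hx).
    exists (lx ++ l'). split.
    + intros y Hy. apply in_app_iff in Hy as [Hy | Hy]; auto.
    + intros v Hv. apply sat_app in Hv as [Hvx Hv].
      intros f [<- | Hf]; [exact (Hx v Hvx) | exact (Hsat v Hv f Hf)].
Qed.

Lemma fin_conseq_incl : Inclusion fin_conseq.
Proof.
  intros A x Hx. exists [x]. split; [intros y [<- | []]; exact Hx|].
  intros v Hv. apply Hv. now left.
Qed.

Lemma fin_conseq_idem : Idempotence fin_conseq.
Proof.
  intros A. apply fset_ext; intros x. split; [|apply fin_conseq_incl].
  intros (l & Hl & Hx). destruct (fin_conseq_list A l Hl) as (l' & HA & Hsat).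
  exists l'. split; [exact HA|]. intros v Hv. exact (Hx v (Hsat v Hv)).
Qed.

Lemma fin_conseq_mono : Monotonicity fin_conseq.
Proof. intros A B HAB x (l & Hl & Hx). exists l. split; auto. Qed.

Lemma fin_conseq_wcompact : WeakCompactness fin_conseq.
Proof.
  intros A HA.
  assert (Hbot : fin_conseq A (And (Var 0) (Neg (Var 0)))) by (rewrite HA; exact I).
  destruct Hbot as (l & Hl & Hbot).
  exists (fun x => In x l). split; [now exists l|]. split; [exact Hl|].
  apply fset_ext; intros x. split; intros _; [exact I|].
  exists l. split; [auto|]. intros v Hv. specialize (Hbot v Hv). simpl in Hbot.
  destruct (v 0); discriminate.
Qed.

Lemma fin_conseq_and : AndR fin_conseq.
Proof.
  intros A a b. apply fset_ext; intros x. split.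
  - intros Hx. destruct (fin_conseq_union A _ x Hx) as (l & Hl & Hsat).
    exists (a :: b :: l). split.
    + intros y [<- | [<- | Hy]]; [right; now left | right; now right | left; auto].
    + intros v Hv. apply Hsat; [intros z Hz; apply Hv; now right; right|].
      intros z ->. simpl. rewrite (Hv a), (Hv b); simpl; auto.
  - intros Hx. destruct (fin_conseq_union A _ x Hx) as (l & Hl & Hsat).
    exists (And a b :: l). split.
    + intros y [<- | Hy]; [now right | left; auto].
    + intros v Hv. apply Hsat; [intros z Hz; apply Hv; now right|].
      specialize (Hv _ (or_introl eq_refl)). simpl in Hv.
      apply andb_prop in Hv as [Ha Hb]. intros z [-> | ->]; assumption.
Qed.

Lemma fin_conseq_neg1 : NegR1 fin_conseq.
Proof.
  intros A a. apply fset_ext; intros x. split; intros _; [exact I|].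
  exists [a; Neg a]. split; [intros y [<- | [<- | []]]; right; [now left | now right]|].
  intros v Hv. exfalso.
  generalize (Hv a (or_introl eq_refl)) (Hv (Neg a) (or_intror (or_introl eq_refl))).
  simpl. destruct (eval v a); easy.
Qed.

Lemma fin_conseq_neg2 : NegR2 fin_conseq.
Proof.
  intros A a H.
  assert (Ha : fin_conseq (add1 A (Neg a)) a) by (rewrite H; exact I).
  destruct (fin_conseq_union A _ a Ha) as (l & Hl & Hsat).
  exists l. split; [exact Hl|]. intros v Hv.
  destruct (eval v a) eqn:E; [reflexivity|]. rewrite <- E.
  apply Hsat; [exact Hv|]. intros z ->. simpl. now rewrite E.
Qed.

Lemma fin_conseq_classI : classI fin_conseq.
Proof.
  exact (conj fin_conseq_incl (conj fin_conseq_idem (conj fin_conseq_mono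
    (conj fin_conseq_wcompact (conj fin_conseq_and
    (conj fin_conseq_neg1 fin_conseq_neg2)))))).
Qed.

Lemma classI_classII C : classI C -> classII C.
Proof.
  intros (Hincl & Hidem & Hmono & Hwc & Hand & Hneg1 & Hneg2).
  repeat split; try assumption.
  intros A B HAB HBA. apply fset_ext; intros x. split; intros Hx.
  - exact (Hmono A B HAB x Hx).
  - rewrite <- Hidem. exact (Hmono B (C A) HBA x Hx).
Qed.

Theorem theorem5 (a b : form) :
  (entails a b <-> (forall C : Operation, classI C -> C (sing a) b)) /\
  (entails a b <-> (forall C : Operation, classII C -> C (sing a) b)) /\
  (entails a b <-> (forall C : Operation, classII C ->
                      forall A : fset, C (add1 A a) b)) /\
  (entails a b <-> (forall C : Operation, classII C ->
                      C (pair a (Neg b)) = fullset)).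
Proof.
  assert (sound : forall C, classII C -> entails a b ->
            (forall S, S a -> C S b) /\ C (pair a (Neg b)) = fullset).
  { intros C (Hincl & Hcum & _ & Hand & Hneg1 & Hneg2) Hab. split.
    - intros S. now apply entails_conseq.
    - apply (refute_entails C Hincl Hcum Hand Hneg1 Hneg2 a b); [exact Hab | now left | now right]. }
  assert (complete : forall S, (forall z, S z -> z = a) -> fin_conseq S b -> entails a b).
  { intros S HS Hb v Ha. apply (fin_conseq_sound S b v Hb). intros z Hz. now rewrite (HS z Hz). }
  pose proof (classI_classII _ fin_conseq_classI) as fin_conseq_classII.
  split; [|split; [|split]]; split.
  - intros Hab C HC. apply (sound C (classI_classII C HC) Hab). reflexivity.
  - intros H. apply (complete (sing a)); [easy | exact (H _ fin_conseq_classI)].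
  - intros Hab C HC. apply (sound C HC Hab). reflexivity.
  - intros H. apply (complete (sing a)); [easy | exact (H _ fin_conseq_classII)].
  - intros Hab C HC A. apply (sound C HC Hab). now right.
  - intros H. apply (complete (add1 (fun _ => False) a)); [intros z [[] | Hz]; exact Hz|].
    exact (H _ fin_conseq_classII _).
  - intros Hab C HC. exact (proj2 (sound C HC Hab)).
  - intros H v Ha. destruct (eval v b) eqn:Eb; [reflexivity|]. rewrite <- Eb.
    apply (fin_conseq_sound (pair a (Neg b))); [rewrite (H _ fin_conseq_classII); exact I|].
    intros z [-> | ->]; simpl; [exact Ha | now rewrite Eb].
Qed.
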